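(* Let $(A,m,i)$ be a monoid in $\mathcal V$, let $(M,\mu,\nu)$ be an $A$-bimodule, and let $d\colon A\to M$ be a morphism in $\mathcal V$ satisfying the Leibniz rule $d\circ m = d\cdot 1_A + 1_A\cdot d$ (as morphisms $A\otimes A\to M$). Then the following are equivalent: (i) $1_A\cdot d=\mu\circ(1_A\otimes d)\colon A\otimes A\to M$ is an epimorphism in $\mathcal V$; (ii) $d\cdot 1_A=\nu\circ(d\otimes 1_A)\colon A\otimes A\to M$ is an epimorphism in $\mathcal V$; (iii) $1_A\cdot d\cdot 1_A\colon A\otimes A\otimes A\to M$ is an epimorphism in $\mathcal V$.
   Context: $\mathcal V$ is a monoidal additive category: a monoidal category which is $\mathbf{Ab}$-enriched with finite biproducts, whose tensor product is additive in each variable, and which has finite limits and colimits. A monoid $(A,m,i)$ in $\mathcal V$ has multiplication $m\colon A\otimes A\to A$ and unit $i\colon I\to A$. An $A$-bimodule $(M,\mu,\nu)$ has left action $\mu\colon A\otimes M\to M$ and right action $\nu\colon M\otimes A\to M$, each satisfying associativity and unit axioms, and compatible with each other. Notation: for morphisms $f\colon X\to M$ and $g\colon Y\to A$, $g\cdot f:=\mu\circ(g\otimes f)\colon Y\otimes X\to M$ and $f\cdot g:=\nu\circ(f\otimes g)$; $1_A\cdot d\cdot 1_A$ denotes the morphism $A\otimes A\otimes A\to M$ obtained by applying $d$ to the middle factor and then both actions (associators suppressed). *)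

From HB Require Import structures.
From mathcomp Require Import all_boot ssralg.
Set Implicit Arguments. Unset Strict Implicit. Unset Printing Implicit Defensive.
Import GRing.Theory.
Local Open Scope ring_scope.

(* A monoidal additive category: Ab-enriched (hom-sets are abelian groups,
   composition bilinear), with a zero object and binary biproducts (hence all
   finite biproducts), kernels and cokernels (hence, with biproducts, all finite
   limits and colimits), and a monoidal structure whose tensor product is
   additive in each variable. *)
Record MonAddCat := {
  Ob :> Type;
  Mor : Ob -> Ob -> zmodType;
  idm : forall X, Mor X X;
  cmp : forall X Y Z, Mor Y Z -> Mor X Y -> Mor X Z; (* cmp g f = g o f *)
  comp_assoc : forall X Y Z W (f : Mor X Y) (g : Mor Y Z) (h : Mor Z W),
      cmp h (cmp g f) = cmp (cmp h g) f;
  comp_id_l : forall X Y (f : Mor X Y), cmp (idm Y) f = f;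
  comp_id_r : forall X Y (f : Mor X Y), cmp f (idm X) = f;
  comp_addl : forall X Y Z (g g' : Mor Y Z) (f : Mor X Y),
      cmp (g + g') f = cmp g f + cmp g' f;
  comp_addr : forall X Y Z (g : Mor Y Z) (f f' : Mor X Y),
      cmp g (f + f') = cmp g f + cmp g f';
  zobj : Ob;
  zobj_zero : idm zobj = 0;
  bip : Ob -> Ob -> Ob;
  bip_i1 : forall X Y, Mor X (bip X Y);
  bip_i2 : forall X Y, Mor Y (bip X Y);
  bip_p1 : forall X Y, Mor (bip X Y) X;
  bip_p2 : forall X Y, Mor (bip X Y) Y;
  bip_p1i1 : forall X Y, cmp (bip_p1 X Y) (bip_i1 X Y) = idm X;
  bip_p2i2 : forall X Y, cmp (bip_p2 X Y) (bip_i2 X Y) = idm Y;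
  bip_p1i2 : forall X Y, cmp (bip_p1 X Y) (bip_i2 X Y) = 0;
  bip_p2i1 : forall X Y, cmp (bip_p2 X Y) (bip_i1 X Y) = 0;
  bip_sum : forall X Y, cmp (bip_i1 X Y) (bip_p1 X Y)
                        + cmp (bip_i2 X Y) (bip_p2 X Y) = idm (bip X Y);
  has_kernels : forall X Y (f : Mor X Y), exists K (k : Mor K X),
      cmp f k = 0 /\
      forall W (g : Mor W X), cmp f g = 0 ->
        exists h : Mor W K, cmp k h = g /\
          forall h' : Mor W K, cmp k h' = g -> h' = h;
  has_cokernels : forall X Y (f : Mor X Y), exists Q (q : Mor Y Q),
      cmp q f = 0 /\
      forall W (g : Mor Y W), cmp g f = 0 ->
        exists h : Mor Q W, cmp h q = g /\
          forall h' : Mor Q W, cmp h' q = g -> h' = h;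
  tens : Ob -> Ob -> Ob;
  tensM : forall X X' Y Y', Mor X X' -> Mor Y Y' -> Mor (tens X Y) (tens X' Y');
  tens_id : forall X Y, tensM (idm X) (idm Y) = idm (tens X Y);
  tens_comp : forall X X' X'' Y Y' Y'' (f : Mor X X') (f' : Mor X' X'')
      (g : Mor Y Y') (g' : Mor Y' Y''),
      tensM (cmp f' f) (cmp g' g) = cmp (tensM f' g') (tensM f g);
  tens_addl : forall X X' Y Y' (f f' : Mor X X') (g : Mor Y Y'),
      tensM (f + f') g = tensM f g + tensM f' g;
  tens_addr : forall X X' Y Y' (f : Mor X X') (g g' : Mor Y Y'),
      tensM f (g + g') = tensM f g + tensM f g';
  unitI : Ob;
  assoc : forall X Y Z, Mor (tens (tens X Y) Z) (tens X (tens Y Z));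
  assoc_inv : forall X Y Z, Mor (tens X (tens Y Z)) (tens (tens X Y) Z);
  assoc_iso1 : forall X Y Z, cmp (assoc_inv X Y Z) (assoc X Y Z) = idm _;
  assoc_iso2 : forall X Y Z, cmp (assoc X Y Z) (assoc_inv X Y Z) = idm _;
  assoc_nat : forall X X' Y Y' Z Z' (f : Mor X X') (g : Mor Y Y') (h : Mor Z Z'),
      cmp (assoc X' Y' Z') (tensM (tensM f g) h)
      = cmp (tensM f (tensM g h)) (assoc X Y Z);
  lunit : forall X, Mor (tens unitI X) X;
  lunit_inv : forall X, Mor X (tens unitI X);
  lunit_iso1 : forall X, cmp (lunit_inv X) (lunit X) = idm _;
  lunit_iso2 : forall X, cmp (lunit X) (lunit_inv X) = idm _;
  lunit_nat : forall X X' (f : Mor X X'),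
      cmp (lunit X') (tensM (idm unitI) f) = cmp f (lunit X);
  runit : forall X, Mor (tens X unitI) X;
  runit_inv : forall X, Mor X (tens X unitI);
  runit_iso1 : forall X, cmp (runit_inv X) (runit X) = idm _;
  runit_iso2 : forall X, cmp (runit X) (runit_inv X) = idm _;
  runit_nat : forall X X' (f : Mor X X'),
      cmp (runit X') (tensM f (idm unitI)) = cmp f (runit X);
  pentagon : forall X Y Z W,
      cmp (assoc X Y (tens Z W)) (assoc (tens X Y) Z W)
      = cmp (tensM (idm X) (assoc Y Z W))
          (cmp (assoc X (tens Y Z) W) (tensM (assoc X Y Z) (idm W)));
  triangle : forall X Y,
      cmp (tensM (idm X) (lunit Y)) (assoc X unitI Y) = tensM (runit X) (idm Y)
}.

Arguments idm {_} _.
Arguments cmp {_ _ _ _}.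
Arguments tensM {_ _ _ _ _}.
Arguments assoc {_} _ _ _.
Arguments lunit {_} _.
Arguments runit {_} _.
Arguments unitI {_}.
Arguments tens {_}.

Section Defs.
Variable C : MonAddCat.

Definition is_epi (X Y : C) (f : Mor X Y) : Prop :=
  forall (Z : C) (g h : Mor Y Z), cmp g f = cmp h f -> g = h.

Definition is_monoid (A : C) (m : Mor (tens A A) A) (i : Mor unitI A) : Prop :=
  [/\ cmp m (tensM m (idm A)) = cmp m (cmp (tensM (idm A) m) (assoc A A A)),
      cmp m (tensM i (idm A)) = lunit A
    & cmp m (tensM (idm A) i) = runit A].

Definition is_bimodule (A : C) (m : Mor (tens A A) A) (i : Mor unitI A)
    (M : C) (mu : Mor (tens A M) M) (nu : Mor (tens M A) M) : Prop :=
  [/\ cmp mu (tensM m (idm M)) = cmp mu (cmp (tensM (idm A) mu) (assoc A A M)),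
      cmp mu (tensM i (idm M)) = lunit M,
      cmp nu (tensM nu (idm A)) = cmp nu (cmp (tensM (idm M) m) (assoc M A A)),
      cmp nu (tensM (idm M) i) = runit M
    & cmp nu (tensM mu (idm A)) = cmp mu (cmp (tensM (idm A) nu) (assoc A M A))].

End Defs.

(* Write [1d] = mu (1 ⊗ d), [d1] = nu (d ⊗ 1) and [1d1] = nu ([1d] ⊗ 1).
   Inserting the unit i on the right of [1d1] gives back [1d], and on the left
   gives [d1]; so [1d1] is epi as soon as [1d] or [d1] is.  Conversely the
   Leibniz rule, applied to d (m ⊗ 1) and d (1 ⊗ m) and combined with the
   associativity of the actions, writes [1d1] as a difference
   [1d] (1 ⊗ m) α - [1d] (m ⊗ 1), and likewise as [d1] (m ⊗ 1) - [d1] (1 ⊗ m) α;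
   hence any pair of maps equalized by [1d] (or by [d1]) is equalized by [1d1]. *)
From mathcomp Require Import all_boot ssralg.
Local Open Scope ring_scope.
Import GRing.Theory.
Set Implicit Arguments.

Section Generalities.
Variable C : MonAddCat.

Lemma tensM_comp_idl (X X' Y Y' : C) (f : Mor X X') (g : Mor Y Y') :
  cmp (tensM f (idm Y')) (tensM (idm X) g) = tensM f g.
Proof. by rewrite -tens_comp comp_id_l comp_id_r. Qed.

Lemma tensM_comp_idr (X X' Y Y' : C) (f : Mor X X') (g : Mor Y Y') :
  cmp (tensM (idm X') g) (tensM f (idm Y)) = tensM f g.
Proof. by rewrite -tens_comp comp_id_l comp_id_r. Qed.

Lemma tensM_id_comp (X Y Y' Y'' : C) (g : Mor Y Y') (g' : Mor Y' Y'') :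
  cmp (tensM (idm X) g') (tensM (idm X) g) = tensM (idm X) (cmp g' g).
Proof. by rewrite -tens_comp comp_id_l. Qed.

Lemma tensM_comp_id (X X' X'' Y : C) (f : Mor X X') (f' : Mor X' X'') :
  cmp (tensM f' (idm Y)) (tensM f (idm Y)) = tensM (cmp f' f) (idm Y).
Proof. by rewrite -tens_comp comp_id_l. Qed.

Lemma epi_of_epi_comp (X Y Z : C) (f : Mor Y Z) (s : Mor X Y) :
  is_epi (cmp f s) -> is_epi f.
Proof. by move=> fs_epi W g h gf_hf; apply: fs_epi; rewrite !comp_assoc gf_hf. Qed.

Lemma epi_of_epi_diff (X Y Z : C) (f : Mor X Z) (g : Mor Y Z) (a b : Mor X Y) :
  f + cmp g a = cmp g b -> is_epi f -> is_epi g.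
Proof.
move=> fE f_epi W h k hg_kg; apply: f_epi.
have /(congr1 (cmp h)) := fE; have /(congr1 (cmp k)) := fE.
rewrite !comp_addr !comp_assoc hg_kg => <-; exact: addIr.
Qed.

Lemma epi_iff_of_factor_diff (X Y Z : C) (f : Mor X Z) (g : Mor Y Z)
    (s : Mor Y X) (a b : Mor X Y) :
  cmp f s = g -> f + cmp g a = cmp g b -> is_epi g <-> is_epi f.
Proof.
move=> fsE fE; split; last exact: epi_of_epi_diff fE.
by rewrite -fsE; apply: epi_of_epi_comp.
Qed.

End Generalities.

Section Derivation.
Variables (C : MonAddCat) (A : C) (m : Mor (tens A A) A) (i : Mor unitI A).
Variables (M : C) (mu : Mor (tens A M) M) (nu : Mor (tens M A) M) (d : Mor A M).
Hypothesis hM : is_bimodule m i mu nu.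
Hypothesis leibniz :
  cmp d m = cmp nu (tensM d (idm A)) + cmp mu (tensM (idm A) d).

Local Notation one_d := (cmp mu (tensM (idm A) d)).
Local Notation d_one := (cmp nu (tensM d (idm A))).
Local Notation one_d_one := (cmp nu (tensM one_d (idm A))).

Lemma one_d_oneE : one_d_one = cmp mu (cmp (tensM (idm A) d_one) (assoc A A A)).
Proof.
case: hM => _ _ _ _ mu_nu_comm.
rewrite -tensM_comp_id comp_assoc mu_nu_comm.
by rewrite -!comp_assoc assoc_nat -tensM_id_comp -!comp_assoc.
Qed.

Lemma one_d_one_unit_r :
  cmp one_d_one (cmp (tensM (idm (tens A A)) i) (runit_inv (tens A A))) = one_d.
Proof.
case: hM => _ _ _ nu_unit _.
rewrite -!comp_assoc (comp_assoc (runit_inv _)) tensM_comp_idl -tensM_comp_idr.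
rewrite -comp_assoc comp_assoc nu_unit comp_assoc runit_nat -comp_assoc.
by rewrite runit_iso2 comp_id_r.
Qed.

Lemma one_d_one_unit_l :
  cmp one_d_one (cmp (assoc_inv A A A)
    (cmp (tensM i (idm (tens A A))) (lunit_inv (tens A A)))) = d_one.
Proof.
case: hM => _ mu_unit _ _ _.
rewrite one_d_oneE -!comp_assoc (comp_assoc _ (assoc_inv _ _ _)) assoc_iso2.
rewrite comp_id_l (comp_assoc (lunit_inv _)) tensM_comp_idr -tensM_comp_idl.
rewrite -comp_assoc comp_assoc mu_unit comp_assoc lunit_nat -comp_assoc.
by rewrite lunit_iso2 comp_id_r.
Qed.

Lemma one_d_one_diff_one_d :
  one_d_one + cmp one_d (tensM m (idm A))
  = cmp one_d (cmp (tensM (idm A) m) (assoc A A A)).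
Proof.
case: hM => mu_assoc _ _ _ _.
have -> : cmp one_d (tensM m (idm A)) = cmp mu (tensM m d).
  by rewrite -comp_assoc tensM_comp_idr.
have leibniz_r : cmp one_d (cmp (tensM (idm A) m) (assoc A A A))
    = one_d_one + cmp mu (cmp (tensM (idm A) one_d) (assoc A A A)).
  rewrite -!comp_assoc (comp_assoc (assoc _ _ _)) tensM_id_comp leibniz.
  by rewrite tens_addr comp_addl comp_addr one_d_oneE.
rewrite leibniz_r -tensM_id_comp -comp_assoc -assoc_nat.
by rewrite !(comp_assoc (tensM (tensM _ _) d)) -mu_assoc tens_id -comp_assoc tensM_comp_idl.
Qed.

Lemma one_d_one_diff_d_one :
  one_d_one + cmp d_one (cmp (tensM (idm A) m) (assoc A A A))
  = cmp d_one (tensM m (idm A)).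
Proof.
case: hM => _ _ nu_assoc _ _.
have dd_one : cmp nu (tensM d_one (idm A)) = cmp nu (cmp (tensM d m) (assoc A A A)).
  rewrite -tensM_comp_id comp_assoc nu_assoc -!comp_assoc assoc_nat tens_id.
  by rewrite (comp_assoc (assoc _ _ _)) tensM_comp_idr.
have -> : cmp d_one (cmp (tensM (idm A) m) (assoc A A A))
    = cmp nu (cmp (tensM d m) (assoc A A A)).
  by rewrite -!comp_assoc (comp_assoc (assoc _ _ _)) tensM_comp_idl.
rewrite -comp_assoc tensM_comp_id leibniz tens_addl comp_addr dd_one.
exact: addrC.
Qed.

Lemma epi_one_d_iff : is_epi one_d <-> is_epi one_d_one.
Proof. exact: epi_iff_of_factor_diff one_d_one_unit_r one_d_one_diff_one_d. Qed.

Lemma epi_d_one_iff : is_epi d_one <-> is_epi one_d_one.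
Proof. exact: epi_iff_of_factor_diff one_d_one_unit_l one_d_one_diff_d_one. Qed.

End Derivation.

Theorem proposition3p5 (C : MonAddCat) (A : C) (m : Mor (tens A A) A)
    (i : Mor unitI A) (M : C) (mu : Mor (tens A M) M) (nu : Mor (tens M A) M)
    (d : Mor A M)
    (hA : is_monoid m i) (hM : is_bimodule m i mu nu)
    (leibniz : cmp d m = cmp nu (tensM d (idm A)) + cmp mu (tensM (idm A) d)) :
  [/\ (is_epi (cmp mu (tensM (idm A) d)) <-> is_epi (cmp nu (tensM d (idm A)))),
      (is_epi (cmp nu (tensM d (idm A)))
        <-> is_epi (cmp nu (tensM (cmp mu (tensM (idm A) d)) (idm A))))
    & (is_epi (cmp nu (tensM (cmp mu (tensM (idm A) d)) (idm A)))
        <-> is_epi (cmp mu (tensM (idm A) d)))].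
Proof.
have one_d_iff := epi_one_d_iff d hM leibniz.
have d_one_iff := epi_d_one_iff d hM leibniz.
split.
- exact: iff_trans one_d_iff (iff_sym d_one_iff).
- exact: d_one_iff.
- exact: iff_sym one_d_iff.
Qed.
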